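(* Let $(A,\succ,\prec)$ be a finite-dimensional dendriform algebra with associated associative product $*$, and let $r\in A\otimes A$ be symmetric ($\sigma(r)=r$) and satisfy the $D$-equation $r_{12}*r_{13}=r_{13}\prec r_{23}+r_{23}\succ r_{12}$. Define $\Delta_\succ(x)=-(\mathrm{id}\otimes L(x)-R_\prec(x)\otimes\mathrm{id})r$ and $\Delta_\prec(x)=(\mathrm{id}\otimes L_\succ(x)-R(x)\otimes\mathrm{id})r$. Then the products $\langle a^*\succ_{A^*}b^*,x\rangle=\langle a^*\otimes b^*,\Delta_\succ(x)\rangle$, $\langle a^*\prec_{A^*}b^*,x\rangle=\langle a^*\otimes b^*,\Delta_\prec(x)\rangle$ define a dendriform algebra on $A^*$, and $(A,A^* )$ is a dendriform D-bialgebra.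
   Context: A dendriform algebra is a vector space with bilinear products $\prec,\succ$ such that, writing $x*y=x\prec y+x\succ y$: $(x\prec y)\prec z=x\prec(y*z)$, $(x\succ y)\prec z=x\succ(y\prec z)$, $x\succ(y\succ z)=(x*y)\succ z$. Notation: $L_\succ(x)y=x\succ y$, $R_\succ(x)y=y\succ x$, $L_\prec(x)y=x\prec y$, $R_\prec(x)y=y\prec x$, $L=L_\succ+L_\prec$, $R=R_\succ+R_\prec$; subscripts $A$, $A^*$ indicate the algebra. $\sigma(u\otimes v)=v\otimes u$. For $r=\sum_i x_i\otimes y_i$: $r_{12}*r_{13}=\sum_{i,j}x_i*x_j\otimes y_i\otimes y_j$, $r_{13}\prec r_{23}=\sum_{i,j}x_i\otimes x_j\otimes y_i\prec y_j$, $r_{23}\succ r_{12}=\sum_{i,j}x_j\otimes x_i\succ y_j\otimes y_i$. Dendriform D-bialgebra: given dendriform algebras $(A,\succ_A,\prec_A)$, $(A^*,\succ_{A^*},\prec_{A^*})$ with associated products $*_A,*_{A^*}$, let $\langle\beta_\succ(a^* ),x\otimes y\rangle=\langle a^*,x\succ_Ay\rangle$, $\langle\beta_\prec(a^* ),x\otimes y\rangle=\langle a^*,x\prec_Ay\rangle$, $\langle\Delta_\succ(x),a^*\otimes b^*\rangle=\langle x,a^*\succ_{A^*}b^*\rangle$, $\langle\Delta_\prec(x),a^*\otimes b^*\rangle=\langle x,a^*\prec_{A^*}b^*\rangle$. The pair $(A,A^* )$ is a dendriform D-bialgebra if for all $x,y\in A$, $a^*,b^*\in A^*$: (1) $\Delta_\prec(x*_Ay)=(\mathrm{id}\otimes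 L_{\succ_A}(x))\Delta_\prec(y)+(R_A(y)\otimes\mathrm{id})\Delta_\prec(x)$; (2) $\Delta_\succ(x*_Ay)=(\mathrm{id}\otimes L_A(x))\Delta_\succ(y)+(R_{\prec_A}(y)\otimes\mathrm{id})\Delta_\succ(x)$; (3) $\beta_\prec(a^**_{A^*}b^* )=(\mathrm{id}\otimes L_{\succ_{A^*}}(a^* ))\beta_\prec(b^* )+(R_{A^*}(b^* )\otimes\mathrm{id})\beta_\prec(a^* )$; (4) $\beta_\succ(a^**_{A^*}b^* )=(\mathrm{id}\otimes L_{A^*}(a^* ))\beta_\succ(b^* )+(R_{\prec_{A^*}}(b^* )\otimes\mathrm{id})\beta_\succ(a^* )$; (5) $(L_A(x)\otimes\mathrm{id}-\mathrm{id}\otimes R_{\prec_A}(x))\Delta_\prec(y)+\sigma[(L_{\succ_A}(y)\otimes\mathrm{id}-\mathrm{id}\otimes R_A(y))\Delta_\succ(x)]=0$; (6) $(L_{A^*}(a^* )\otimes\mathrm{id}-\mathrm{id}\otimes R_{\prec_{A^*}}(a^* ))\beta_\prec(b^* )+\sigma[(L_{\succ_{A^*}}(b^* )\otimes\mathrm{id}-\mathrm{id}\otimes R_{A^*}(b^* ))\beta_\succ(a^* )]=0$. *)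

(* Finite-dimensional algebras are represented in coordinates
   with respect to a basis e_0..e_{n-1} of A (and the dual basis of A^* ). *)
From HB Require Import structures.
From mathcomp Require Import all_boot all_order all_algebra.
Set Implicit Arguments. Unset Strict Implicit. Unset Printing Implicit Defensive.
Import GRing.Theory.
Local Open Scope ring_scope.

Section Dend.
Variables (K : fieldType) (n : nat).

(* elements of A (coordinates), of A (x) A, of A (x) A (x) A *)
Definition vec := 'I_n -> K.
Definition ten2 := 'I_n -> 'I_n -> K.
(* a bilinear product, via structure constants: e_i . e_j = sum_k c i j k e_k *)
Definition sconst := 'I_n -> 'I_n -> 'I_n -> K.

Definition bmul (c : sconst) (x y : vec) : vec :=
  fun k => \sum_(i < n) \sum_(j < n) x i * y j * c i j k.
Definition vadd (u v : vec) : vec := fun k => u k + v k.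
Definition basis_vec (k : 'I_n) : vec := fun l => if l == k then 1 else 0.

Definition star (s p : sconst) (x y : vec) : vec := vadd (bmul s x y) (bmul p x y).

(* (f (x) id) t and (id (x) f) t for a linear map f, and the flip sigma *)
Definition tl (f : vec -> vec) (t : ten2) : ten2 := fun i j => f (fun a => t a j) i.
Definition tr (f : vec -> vec) (t : ten2) : ten2 := fun i j => f (fun b => t i b) j.
Definition flip (t : ten2) : ten2 := fun i j => t j i.

(* (A, s = succ, p = prec) is a dendriform algebra *)
Definition dendriform (s p : sconst) : Prop :=
  forall x y z : vec, forall k,
    [/\ bmul p (bmul p x y) z k = bmul p x (star s p y z) k,
        bmul p (bmul s x y) z k = bmul s x (bmul p y z) k
      & bmul s x (bmul s y z) k = bmul s (star s p x y) z k].

(* comultiplication dual to a product c' on the dual space: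
   <Delta(x), a (x) b> = <x, a c' b>, i.e. Delta(x) i j = sum_k x_k c' i j k *)
Definition comult (c' : sconst) (x : vec) : ten2 :=
  fun i j => \sum_(k < n) x k * c' i j k.

(* conditions (1), (2), (5) for the pair ((s,p) on A, (s',p') on A^* ) *)
Definition bialg_half (s p s' p' : sconst) : Prop :=
  let Ds := comult s' in let Dp := comult p' in
  forall x y : vec, forall i j,
  [/\ Dp (star s p x y) i j
        = tr (bmul s x) (Dp y) i j + tl (fun v => star s p v y) (Dp x) i j,
      Ds (star s p x y) i j
        = tr (star s p x) (Ds y) i j + tl (fun v => bmul p v y) (Ds x) i j
    & (tl (star s p x) (Dp y) i j - tr (fun v => bmul p v x) (Dp y) i j)
      + flip (fun a b => tl (bmul s y) (Ds x) a b
                         - tr (fun v => star s p v y) (Ds x) a b) i j = 0].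

(* dendriform D-bialgebra (A, A^* ): conditions (1)-(6), both dendriform *)
Definition D_bialgebra (s p s' p' : sconst) : Prop :=
  [/\ dendriform s p, dendriform s' p', bialg_half s p s' p' & bialg_half s' p' s p].

Definition symmetric_tensor (r : ten2) : Prop := forall i j, r i j = r j i.

(* D-equation r12*r13 = r13 < r23 + r23 > r12, coordinatewise at (k,l,m) *)
Definition D_equation (s p : sconst) (r : ten2) : Prop :=
  forall k l m,
    star s p (fun a => r a l) (fun c => r c m) k
    = bmul p (fun b => r k b) (fun d => r l d) m
      + bmul s (fun a => r a m) (fun d => r k d) l.

(* Delta_succ(x) = -(id (x) L(x) - R_prec(x) (x) id) r *)
Definition Delta_succ (s p : sconst) (r : ten2) (x : vec) : ten2 :=
  fun i j => - (tr (star s p x) r i j - tl (fun v => bmul p v x) r i j).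
(* Delta_prec(x) = (id (x) L_succ(x) - R(x) (x) id) r *)
Definition Delta_prec (s p : sconst) (r : ten2) (x : vec) : ten2 :=
  fun i j => tr (bmul s x) r i j - tl (fun v => star s p v x) r i j.

(* structure constants of the induced products on A^* (dual basis):
   <e^i . e^j, e_k> = <e^i (x) e^j, Delta(e_k)> *)
Definition dual_succ (s p : sconst) (r : ten2) : sconst :=
  fun i j k => Delta_succ s p r (basis_vec k) i j.
Definition dual_prec (s p : sconst) (r : ten2) : sconst :=
  fun i j k => Delta_prec s p r (basis_vec k) i j.

End Dend.

From mathcomp Require Import all_boot all_order all_algebra ring.
From Stdlib Require Import FunctionalExtensionality.
Set Implicit Arguments. Unset Strict Implicit. Unset Printing Implicit Defensive.
Import GRing.Theory.
Local Open Scope ring_scope.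

(* Write <u, x> for the pairing of A^* with A and r# : A^* -> A,
   r# u = (u (x) id) r.  The argument has three layers.
   1. Coordinate calculus: pairing, linear maps and their transposes, and the
      linearity of the products of A in each argument.
   2. Closed formulas for the induced products on A^*, read off from the
      definitions of Delta_succ and Delta_prec and the symmetry of r, e.g.
        <u >' v, x> = <u, r# v < x> - <v, x * r# u>;
      and, using the D-equation, the fact that -r# is a morphism of
      dendriform products from A^* to A, e.g. r# (u >' v) = - r# u > r# v.
   3. Every axiom to be proved is an identity between coordinates; writing
      each coordinate as a pairing and expanding with the formulas of layer 2
      reduces it to the dendriform axioms of A (and associativity of x * y) and
      the symmetry <a, r# b> = <b, r# a>, after which it is a ring identity. *)

Section Coordinates.
Variables (K : fieldType) (n : nat).
Local Notation vec := (vec K n).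
Local Notation e := (@basis_vec K n).

Definition pairing (u x : vec) : K := \sum_(c < n) u c * x c.

Lemma sum_delta_l k (F : 'I_n -> K) : \sum_(l < n) e k l * F l = F k.
Proof.
rewrite (bigD1 k) //= /basis_vec eqxx mul1r big1 ?addr0 // => l /negbTE ->.
by rewrite mul0r.
Qed.

Lemma sum_delta_r k (F : 'I_n -> K) : \sum_(l < n) F l * e k l = F k.
Proof. by rewrite -[RHS](sum_delta_l k); apply: eq_bigr => l _; rewrite mulrC. Qed.

Lemma pairingC u x : pairing u x = pairing x u.
Proof. by apply: eq_bigr => c _; rewrite mulrC. Qed.

Lemma pairing_basis_r u k : pairing u (e k) = u k.
Proof. exact: sum_delta_r. Qed.

Lemma pairing_basis_l u k : pairing (e k) u = u k.
Proof. exact: sum_delta_l. Qed.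

Lemma eq_from_pairing (x y : vec) :
  (forall u, pairing x u = pairing y u) -> forall k, x k = y k.
Proof. by move=> H k; rewrite -!pairing_basis_r. Qed.

Lemma pairing_addl u (x y : vec) :
  pairing (fun a => x a + y a) u = pairing x u + pairing y u.
Proof. by rewrite /pairing -big_split; apply: eq_bigr => c _; rewrite mulrDl. Qed.

Lemma pairing_addr u (x y : vec) :
  pairing u (fun a => x a + y a) = pairing u x + pairing u y.
Proof. by rewrite pairingC pairing_addl !(pairingC u). Qed.

Lemma pairing_oppr u (x : vec) : pairing u (fun a => - x a) = - pairing u x.
Proof. by rewrite /pairing -sumrN; apply: eq_bigr => c _; rewrite mulrN. Qed.

Lemma pairing_sumr (w : 'I_n -> K) (F : 'I_n -> vec) y :
  pairing y (fun k => \sum_(i < n) w i * F i k) = \sum_(i < n) w i * pairing y (F i).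
Proof.
rewrite /pairing; under eq_bigr do rewrite mulr_sumr.
rewrite exchange_big /=; apply: eq_bigr => i _; rewrite mulr_sumr.
by apply: eq_bigr => c _; rewrite mulrCA.
Qed.

Lemma dsum_l (u v : vec) (T : 'I_n -> 'I_n -> K) :
  \sum_(i < n) \sum_(j < n) u i * v j * T i j
  = \sum_(i < n) u i * \sum_(j < n) v j * T i j.
Proof. by apply: eq_bigr => i _; rewrite mulr_sumr; apply: eq_bigr => j _; rewrite mulrA. Qed.

Lemma dsum_r (u v : vec) (T : 'I_n -> 'I_n -> K) :
  \sum_(i < n) \sum_(j < n) u i * v j * T i j
  = \sum_(j < n) v j * \sum_(i < n) u i * T i j.
Proof.
rewrite exchange_big /=; apply: eq_bigr => j _; rewrite mulr_sumr.
by apply: eq_bigr => i _; rewrite mulrCA mulrA.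
Qed.

Lemma dsumB (u v : vec) (T T' : 'I_n -> 'I_n -> K) :
  \sum_(i < n) \sum_(j < n) u i * v j * (T i j - T' i j)
  = \sum_(i < n) \sum_(j < n) u i * v j * T i j
    - \sum_(i < n) \sum_(j < n) u i * v j * T' i j.
Proof.
rewrite -sumrB; apply: eq_bigr => i _; rewrite -sumrB.
by apply: eq_bigr => j _; rewrite mulrBr.
Qed.

Definition linmap (f : vec -> vec) : Prop :=
  forall v j, f v j = \sum_(b < n) v b * f (e b) j.

Section Linear.
Variables (f : vec -> vec).
Hypothesis f_lin : linmap f.

Lemma linmap_sum (w : 'I_n -> K) (g : 'I_n -> vec) :
  f (fun a => \sum_(i < n) w i * g i a) = fun j => \sum_(i < n) w i * f (g i) j.
Proof.
apply: functional_extensionality => j.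
rewrite f_lin; under eq_bigr do rewrite mulr_suml.
rewrite exchange_big /=; apply: eq_bigr => i _; rewrite (f_lin (g i)) mulr_sumr.
by apply: eq_bigr => b _; rewrite mulrA.
Qed.

Lemma linmap_add (u v : vec) j : f (fun a => u a + v a) j = f u j + f v j.
Proof.
rewrite f_lin (f_lin u) (f_lin v) -big_split /=.
by apply: eq_bigr => b _; rewrite mulrDl.
Qed.

Lemma linmap_opp (u : vec) : f (fun a => - u a) = fun j => - f u j.
Proof.
apply: functional_extensionality => j.
by rewrite f_lin (f_lin u) -sumrN /=; apply: eq_bigr => b _; rewrite mulNr.
Qed.

Definition transpose (u : vec) : vec := fun b => pairing u (f (e b)).

Lemma pairing_transpose u z : pairing u (f z) = pairing (transpose u) z.
Proof.
rewrite /pairing /transpose /pairing; under eq_bigr do rewrite f_lin mulr_sumr.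
rewrite exchange_big /=; apply: eq_bigr => b _; rewrite mulr_suml.
by apply: eq_bigr => c _; rewrite mulrCA mulrC.
Qed.

End Linear.

Lemma bmul_basis_l c i (y : vec) k : bmul c (e i) y k = \sum_(b < n) y b * c i b k.
Proof.
rewrite /bmul (eq_bigr (fun a => e i a * \sum_(b < n) y b * c a b k)).
  by rewrite sum_delta_l.
by move=> a _; rewrite mulr_sumr; apply: eq_bigr => b _; rewrite mulrA.
Qed.

Lemma bmul_basis c i j k : bmul c (e i) (e j) k = c i j k.
Proof. by rewrite bmul_basis_l sum_delta_l. Qed.

Lemma bmul_linmap_l c y : linmap (fun v => bmul c v y).
Proof.
move=> v j /=; apply: eq_bigr => a _.
by rewrite bmul_basis_l mulr_sumr; apply: eq_bigr => b _; rewrite mulrA.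
Qed.

Lemma bmul_linmap_r c x : linmap (bmul c x).
Proof.
move=> v j; rewrite /bmul exchange_big /=; apply: eq_bigr => b _.
rewrite mulr_sumr; apply: eq_bigr => a _.
rewrite (eq_bigr (fun b' => e b b' * (x a * c a b' j))) ?sum_delta_l.
  by rewrite mulrCA mulrA.
by move=> b' _; rewrite mulrAC mulrC mulrA.
Qed.

Lemma star_linmap_l s p y : linmap (fun v => star s p v y).
Proof.
move=> v j; rewrite /star /vadd (bmul_linmap_l s y) (bmul_linmap_l p y) -big_split.
by apply: eq_bigr => b _; rewrite mulrDr.
Qed.

Lemma star_linmap_r s p x : linmap (star s p x).
Proof.
move=> v j; rewrite /star /vadd bmul_linmap_r (bmul_linmap_r p x) -big_split.
by apply: eq_bigr => b _; rewrite mulrDr.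
Qed.

Lemma bmul_suml c (w : 'I_n -> K) (g : 'I_n -> vec) y :
  bmul c (fun a => \sum_(i < n) w i * g i a) y
  = fun k => \sum_(i < n) w i * bmul c (g i) y k.
Proof. exact: (linmap_sum (bmul_linmap_l c y)). Qed.

Lemma bmul_sumr c (w : 'I_n -> K) (g : 'I_n -> vec) x :
  bmul c x (fun a => \sum_(i < n) w i * g i a)
  = fun k => \sum_(i < n) w i * bmul c x (g i) k.
Proof. exact: (linmap_sum (bmul_linmap_r c x)). Qed.

Lemma star_suml s p (w : 'I_n -> K) (g : 'I_n -> vec) y :
  star s p (fun a => \sum_(i < n) w i * g i a) y
  = fun k => \sum_(i < n) w i * star s p (g i) y k.
Proof. exact: (linmap_sum (star_linmap_l s p y)). Qed.

Lemma star_sumr s p (w : 'I_n -> K) (g : 'I_n -> vec) x :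
  star s p x (fun a => \sum_(i < n) w i * g i a)
  = fun k => \sum_(i < n) w i * star s p x (g i) k.
Proof. exact: (linmap_sum (star_linmap_r s p x)). Qed.

Lemma bmul_oppl c (u y : vec) : bmul c (fun a => - u a) y = fun k => - bmul c u y k.
Proof. exact: (linmap_opp (bmul_linmap_l c y)). Qed.

Lemma bmul_oppr c (u x : vec) : bmul c x (fun a => - u a) = fun k => - bmul c x u k.
Proof. exact: (linmap_opp (bmul_linmap_r c x)). Qed.

Lemma star_oppl s p (u y : vec) : star s p (fun a => - u a) y = fun k => - star s p u y k.
Proof. exact: (linmap_opp (star_linmap_l s p y)). Qed.

Lemma star_oppr s p (u x : vec) : star s p x (fun a => - u a) = fun k => - star s p x u k.
Proof. exact: (linmap_opp (star_linmap_r s p x)). Qed.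

Lemma bmul_addl c (u v y : vec) k :
  bmul c (fun a => u a + v a) y k = bmul c u y k + bmul c v y k.
Proof. exact: (linmap_add (bmul_linmap_l c y)). Qed.

Lemma bmul_addr c (u v x : vec) k :
  bmul c x (fun a => u a + v a) k = bmul c x u k + bmul c x v k.
Proof. exact: (linmap_add (bmul_linmap_r c x)). Qed.

(* Coordinates of a product as pairings, so the pairing formulas apply. *)
Lemma bmul_coord c (u v : vec) j : bmul c u v j = pairing (bmul c u v) (e j).
Proof. by rewrite pairing_basis_r. Qed.

Lemma star_coord s p (u v : vec) j : star s p u v j = pairing (star s p u v) (e j).
Proof. by rewrite pairing_basis_r. Qed.

Lemma pairing_bmul c u v x :
  pairing (bmul c u v) x = \sum_(i < n) \sum_(j < n) u i * v j * comult c x i j.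
Proof.
rewrite /pairing /bmul /comult; under eq_bigr do rewrite mulr_suml.
rewrite exchange_big /=; apply: eq_bigr => i _.
under eq_bigr do rewrite mulr_suml.
rewrite exchange_big /=; apply: eq_bigr => j _.
by rewrite mulr_sumr; apply: eq_bigr => k _; rewrite mulrCA mulrC.
Qed.

Lemma comult_pairing c v i j : comult c v i j = pairing v (bmul c (e i) (e j)).
Proof. by apply: eq_bigr => k _; rewrite bmul_basis. Qed.

Lemma tr_comult c f x i j :
  linmap f -> tr f (comult c x) i j = pairing (bmul c (e i) (transpose f (e j))) x.
Proof.
move=> f_lin; rewrite /tr f_lin pairing_bmul.
rewrite [RHS](eq_bigr (fun a => e i a * \sum_(b < n) transpose f (e j) b * comult c x a b)).
  rewrite sum_delta_l; apply: eq_bigr => b _.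
  by rewrite /transpose pairing_basis_l mulrC.
by move=> a _; rewrite mulr_sumr; apply: eq_bigr => b _; rewrite mulrA.
Qed.

Lemma tl_comult c f x i j :
  linmap f -> tl f (comult c x) i j = pairing (bmul c (transpose f (e i)) (e j)) x.
Proof.
move=> f_lin; rewrite /tl f_lin pairing_bmul.
rewrite [RHS](eq_bigr (fun a => transpose f (e i) a * comult c x a j)).
  by apply: eq_bigr => b _; rewrite /transpose pairing_basis_l mulrC.
move=> a _; rewrite (eq_bigr (fun b => e j b * (transpose f (e i) a * comult c x a b))).
  by rewrite sum_delta_l.
by move=> b _; rewrite mulrAC mulrC mulrA.
Qed.

Lemma tr_comult_dual c g (v : vec) i j :
  tr g (comult c v) i j = g (transpose (bmul c (e i)) v) j.
Proof.
by congr (g _ j); apply: functional_extensionality => b; rewrite comult_pairing.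
Qed.

Lemma tl_comult_dual c g (v : vec) i j :
  tl g (comult c v) i j = g (transpose (fun w => bmul c w (e j)) v) i.
Proof.
by congr (g _ i); apply: functional_extensionality => a; rewrite comult_pairing.
Qed.

End Coordinates.

Section Dendriform.
Variables (K : fieldType) (n : nat) (s p : sconst K n).
Hypothesis dend : dendriform s p.
Local Notation vec := (vec K n).

Lemma prec_prec (x y z : vec) : bmul p (bmul p x y) z = bmul p x (star s p y z).
Proof. by apply: functional_extensionality => k; case: (dend x y z k). Qed.

Lemma succ_prec (x y z : vec) : bmul p (bmul s x y) z = bmul s x (bmul p y z).
Proof. by apply: functional_extensionality => k; case: (dend x y z k). Qed.

Lemma succ_succ (x y z : vec) : bmul s x (bmul s y z) = bmul s (star s p x y) z.
Proof. by apply: functional_extensionality => k; case: (dend x y z k). Qed.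

Lemma star_assoc (x y z : vec) : star s p (star s p x y) z = star s p x (star s p y z).
Proof.
apply: functional_extensionality => k.
have pp : bmul p (bmul p x y) z k = bmul p x (bmul s y z) k + bmul p x (bmul p y z) k.
  by rewrite prec_prec /star /vadd bmul_addr.
have ss : bmul s x (bmul s y z) k = bmul s (bmul s x y) z k + bmul s (bmul p x y) z k.
  by rewrite succ_succ /star /vadd bmul_addl.
rewrite /star /vadd !bmul_addl !bmul_addr pp ss succ_prec; ring.
Qed.

End Dendriform.

Section Dual.
Variables (K : fieldType) (n : nat) (s p : sconst K n) (r : ten2 K n).
Hypothesis r_sym : symmetric_tensor r.
Hypothesis r_D : D_equation s p r.
Local Notation vec := (vec K n).
Local Notation e := (@basis_vec K n).
Local Notation "u >' v" := (bmul (dual_succ s p r) u v) (at level 40).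
Local Notation "u <' v" := (bmul (dual_prec s p r) u v) (at level 40).
Local Notation "u *' v" := (star (dual_succ s p r) (dual_prec s p r) u v) (at level 40).

Definition rmap (u : vec) : vec := fun d => \sum_(c < n) u c * r c d.
Definition rcol (d : 'I_n) : vec := fun a => r a d.

Lemma rmap_sym a b : pairing a (rmap b) = pairing b (rmap a).
Proof.
rewrite /pairing /rmap; under eq_bigr do rewrite mulr_sumr.
rewrite exchange_big /=; apply: eq_bigr => c _; rewrite mulr_sumr.
by apply: eq_bigr => d _; rewrite (r_sym d c) mulrCA.
Qed.

Lemma rmap_cols u : rmap u = fun d => \sum_(c < n) u c * rcol c d.
Proof.
apply: functional_extensionality => d.
by apply: eq_bigr => c _; rewrite /rcol r_sym.
Qed.

Lemma comult_dual_succ x i j : comult (dual_succ s p r) x i j = Delta_succ s p r x i j.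
Proof.
rewrite /comult /dual_succ /Delta_succ /tr /tl.
rewrite (star_linmap_l s p _ x) (bmul_linmap_r p _ x) -sumrB -sumrN.
by apply: eq_bigr => k _; rewrite mulrN mulrBr.
Qed.

Lemma comult_dual_prec x i j : comult (dual_prec s p r) x i j = Delta_prec s p r x i j.
Proof.
rewrite /comult /dual_prec /Delta_prec /tr /tl.
rewrite (bmul_linmap_l s _ x) (star_linmap_r s p _ x) -sumrB.
by apply: eq_bigr => k _; rewrite mulrBr.
Qed.

Lemma pairing_dual_succ u v x :
  pairing (u >' v) x = pairing u (bmul p (rmap v) x) - pairing v (star s p x (rmap u)).
Proof.
rewrite pairing_bmul.
under eq_bigr do under eq_bigr do rewrite comult_dual_succ /Delta_succ /tr /tl opprB.
rewrite dsumB dsum_l dsum_r /pairing; congr (_ - _).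
  by apply: eq_bigr => i _; rewrite (rmap_cols v) bmul_suml.
by apply: eq_bigr => j _; rewrite star_sumr.
Qed.

Lemma pairing_dual_prec u v x :
  pairing (u <' v) x = pairing v (bmul s x (rmap u)) - pairing u (star s p (rmap v) x).
Proof.
rewrite pairing_bmul.
under eq_bigr do under eq_bigr do rewrite comult_dual_prec /Delta_prec /tr /tl.
rewrite dsumB dsum_r dsum_l /pairing; congr (_ - _).
  by apply: eq_bigr => j _; rewrite bmul_sumr.
by apply: eq_bigr => i _; rewrite (rmap_cols v) star_suml.
Qed.

Lemma pairing_dual_star u v x :
  pairing (u *' v) x = - pairing u (bmul s (rmap v) x) - pairing v (bmul p x (rmap u)).
Proof.
rewrite /star pairing_addl pairing_dual_succ pairing_dual_prec.
rewrite /star /vadd !pairing_addr; ring.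
Qed.

Lemma D_equation_cols j d i :
  star s p (rcol d) (rcol i) j = bmul p (rcol j) (rcol d) i + bmul s (rcol i) (rcol j) d.
Proof.
have row_col (k : 'I_n) : (fun b => r k b) = rcol k.
  by apply: functional_extensionality => b; rewrite /rcol r_sym.
by have := r_D j d i; rewrite !row_col.
Qed.

Lemma rmap_dual_succ u v : rmap (u >' v) = fun d => - bmul s (rmap u) (rmap v) d.
Proof.
apply: functional_extensionality => d.
change (pairing (u >' v) (rcol d) = - bmul s (rmap u) (rmap v) d).
rewrite pairing_dual_succ !rmap_cols bmul_suml star_sumr bmul_suml !pairing_sumr.
under [in RHS]eq_bigr do rewrite bmul_sumr.
rewrite /pairing -[X in X - _ = _]dsum_r -[X in _ - X = _]dsum_l -[X in _ = - X]dsum_l.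
rewrite -dsumB -sumrN; apply: eq_bigr => i _.
rewrite -sumrN; apply: eq_bigr => j _.
rewrite D_equation_cols; ring.
Qed.

Lemma rmap_dual_prec u v : rmap (u <' v) = fun d => - bmul p (rmap u) (rmap v) d.
Proof.
apply: functional_extensionality => d.
change (pairing (u <' v) (rcol d) = - bmul p (rmap u) (rmap v) d).
rewrite pairing_dual_prec !rmap_cols bmul_sumr star_suml bmul_suml !pairing_sumr.
under [in RHS]eq_bigr do rewrite bmul_sumr.
rewrite /pairing -[X in X - _ = _]dsum_l -[X in _ - X = _]dsum_r -[X in _ = - X]dsum_l.
rewrite -dsumB -sumrN; apply: eq_bigr => i _.
rewrite -sumrN; apply: eq_bigr => j _.
rewrite D_equation_cols; ring.
Qed.

Lemma rmap_dual_star u v : rmap (u *' v) = fun d => - star s p (rmap u) (rmap v) d.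
Proof.
have rmap_add (a b : vec) : rmap (vadd a b) = fun d => rmap a d + rmap b d.
  by apply: functional_extensionality => d; apply: pairing_addl.
rewrite /star rmap_add rmap_dual_succ rmap_dual_prec.
by apply: functional_extensionality => d; rewrite /vadd opprD.
Qed.

Hypothesis dend : dendriform s p.

Lemma dual_dendriform : dendriform (dual_succ s p r) (dual_prec s p r).
Proof.
move=> u v w k; split; apply: eq_from_pairing => X;
  do 2 rewrite ?pairing_dual_prec ?pairing_dual_succ ?pairing_dual_star
               ?rmap_dual_prec ?rmap_dual_succ ?rmap_dual_star
               ?bmul_oppr ?bmul_oppl ?star_oppl ?star_oppr ?pairing_oppr.
- by rewrite (succ_prec dend) (succ_succ dend) (star_assoc dend); ring.
- by rewrite (succ_succ dend) (prec_prec dend) (star_assoc dend); ring.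
- by rewrite (succ_prec dend) (prec_prec dend) (star_assoc dend); ring.
Qed.

(* Each coordinate becomes a pairing over A^*; the two
   cross terms are identified through the self-adjointness of r#. *)
Lemma bialg_half_primal : bialg_half s p (dual_succ s p r) (dual_prec s p r).
Proof.
rewrite /bialg_half /= => x y i j; split.
- rewrite [LHS]comult_pairing [LHS]pairingC.
  rewrite (tr_comult _ _ _ _ (bmul_linmap_r s x)) (tl_comult _ _ _ _ (star_linmap_l s p y)).
  set W := transpose (bmul s x) (e j); set Z := transpose (fun v => star s p v y) (e i).
  have cross : pairing (e i) (star s p (rmap W) y) = pairing (e j) (bmul s x (rmap Z)).
    by rewrite (pairing_transpose (star_linmap_l s p y)) rmap_sym
               -(pairing_transpose (bmul_linmap_r s x)).
  rewrite !pairing_dual_prec -(pairing_transpose (bmul_linmap_r s x))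
          -(pairing_transpose (star_linmap_l s p y)) cross.
  by rewrite (succ_succ dend) (star_assoc dend); ring.
- rewrite [LHS]comult_pairing [LHS]pairingC.
  rewrite (tr_comult _ _ _ _ (star_linmap_r s p x)) (tl_comult _ _ _ _ (bmul_linmap_l p y)).
  set W := transpose (star s p x) (e j); set Z := transpose (fun v => bmul p v y) (e i).
  have cross : pairing (e i) (bmul p (rmap W) y) = pairing (e j) (star s p x (rmap Z)).
    by rewrite (pairing_transpose (bmul_linmap_l p y)) rmap_sym
               -(pairing_transpose (star_linmap_r s p x)).
  rewrite !pairing_dual_succ -(pairing_transpose (star_linmap_r s p x))
          -(pairing_transpose (bmul_linmap_l p y)) cross.
  by rewrite (prec_prec dend) (star_assoc dend); ring.
- rewrite /flip (tl_comult _ _ _ _ (star_linmap_r s p x)).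
  rewrite (tr_comult _ _ _ _ (bmul_linmap_l p x)) (tl_comult _ _ _ _ (bmul_linmap_r s y)).
  rewrite (tr_comult _ _ _ _ (star_linmap_l s p y)).
  set Z1 := transpose (star s p x) (e i); set W2 := transpose (fun v => bmul p v x) (e j).
  set Z3 := transpose (bmul s y) (e j); set W4 := transpose (fun v => star s p v y) (e i).
  have cross1 : pairing (e j) (bmul s y (rmap Z1)) = pairing (e i) (star s p x (rmap Z3)).
    by rewrite (pairing_transpose (bmul_linmap_r s y)) rmap_sym
               -(pairing_transpose (star_linmap_r s p x)).
  have cross2 : pairing (e i) (star s p (rmap W2) y) = pairing (e j) (bmul p (rmap W4) x).
    by rewrite (pairing_transpose (star_linmap_l s p y)) rmap_sym
               -(pairing_transpose (bmul_linmap_l p x)).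
  rewrite !pairing_dual_prec !pairing_dual_succ.
  rewrite -(pairing_transpose (star_linmap_r s p x)) -(pairing_transpose (bmul_linmap_l p x)).
  rewrite -(pairing_transpose (bmul_linmap_r s y)) -(pairing_transpose (star_linmap_l s p y)).
  by rewrite cross1 cross2 (succ_prec dend) (star_assoc dend); ring.
Qed.

Lemma bialg_half_dual : bialg_half (dual_succ s p r) (dual_prec s p r) s p.
Proof.
rewrite /bialg_half /= => u v i j; split.
- rewrite [LHS]comult_pairing tr_comult_dual tl_comult_dual bmul_coord star_coord.
  set V := transpose (bmul p (e i)) v; set U := transpose (fun w => bmul p w (e j)) u.
  have cross : pairing u (bmul p (rmap V) (e j)) = pairing v (bmul p (e i) (rmap U)).
    by rewrite (pairing_transpose (bmul_linmap_l p (e j))) rmap_sym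
               -(pairing_transpose (bmul_linmap_r p (e i))).
  rewrite !pairing_dual_star pairing_dual_succ -(pairing_transpose (bmul_linmap_r p (e i)))
          -(pairing_transpose (bmul_linmap_l p (e j))) cross.
  by rewrite (succ_prec dend) (prec_prec dend); ring.
- rewrite [LHS]comult_pairing tr_comult_dual tl_comult_dual star_coord bmul_coord.
  set V := transpose (bmul s (e i)) v; set U := transpose (fun w => bmul s w (e j)) u.
  have cross : pairing u (bmul s (rmap V) (e j)) = pairing v (bmul s (e i) (rmap U)).
    by rewrite (pairing_transpose (bmul_linmap_l s (e j))) rmap_sym
               -(pairing_transpose (bmul_linmap_r s (e i))).
  rewrite !pairing_dual_star pairing_dual_prec -(pairing_transpose (bmul_linmap_r s (e i)))
          -(pairing_transpose (bmul_linmap_l s (e j))) cross.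
  by rewrite (succ_succ dend) (succ_prec dend); ring.
- rewrite /flip !tr_comult_dual !tl_comult_dual !star_coord !bmul_coord.
  set V1 := transpose (fun w => bmul p w (e j)) v; set V2 := transpose (bmul p (e i)) v.
  set U3 := transpose (fun w => bmul s w (e i)) u; set U4 := transpose (bmul s (e j)) u.
  have cross1 : pairing u (bmul s (rmap V1) (e i)) = pairing v (bmul p (rmap U3) (e j)).
    by rewrite (pairing_transpose (bmul_linmap_l s (e i))) rmap_sym
               -(pairing_transpose (bmul_linmap_l p (e j))).
  have cross2 : pairing u (bmul s (e j) (rmap V2)) = pairing v (bmul p (e i) (rmap U4)).
    by rewrite (pairing_transpose (bmul_linmap_r s (e j))) rmap_sym
               -(pairing_transpose (bmul_linmap_r p (e i))).
  rewrite !pairing_dual_star pairing_dual_prec pairing_dual_succ.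
  rewrite -(pairing_transpose (bmul_linmap_l p (e j))) -(pairing_transpose (bmul_linmap_r p (e i))).
  rewrite -(pairing_transpose (bmul_linmap_l s (e i))) -(pairing_transpose (bmul_linmap_r s (e j))).
  by rewrite cross1 cross2 (prec_prec dend) (succ_succ dend); ring.
Qed.

End Dual.

Theorem corollary4p4p4 (K : fieldType) (n : nat) (s p : sconst K n) (r : ten2 K n) :
  dendriform s p -> symmetric_tensor r -> D_equation s p r ->
  dendriform (dual_succ s p r) (dual_prec s p r) /\
  D_bialgebra s p (dual_succ s p r) (dual_prec s p r).
Proof.
move=> dend r_sym r_D.
have dual_dend := dual_dendriform r_sym r_D dend.
split=> //; split=> //.
- exact: bialg_half_primal.
- exact: bialg_half_dual.
Qed.
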